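(* Let $\boldsymbol{\Sigma}=\boldsymbol{U}\boldsymbol{\Lambda}\boldsymbol{U}^\top\in\mathbb{R}^{p\times p}$ be positive semidefinite, $\boldsymbol{\beta}\in\mathbb{R}^p$, $r\le k$, and $S_k\in\mathbb{R}^{p\times k}$. Write $\boldsymbol{U}=[\boldsymbol{U}_r\ \boldsymbol{U}_{p-r}]$, $\boldsymbol{\Lambda}=\mathrm{diag}(\boldsymbol{\Lambda}_r,\boldsymbol{\Lambda}_{p-r})$, $\boldsymbol{\Sigma}_{p-r}=\boldsymbol{U}_{p-r}\boldsymbol{\Lambda}_{p-r}\boldsymbol{U}_{p-r}^\top$, $\widetilde S_1=\boldsymbol{U}_r^\top S_k$, $\widetilde S_2=\boldsymbol{U}_{p-r}^\top S_k$, $\widetilde{\boldsymbol{\beta}}_1=\boldsymbol{U}_r^\top\boldsymbol{\beta}$, $\widetilde{\boldsymbol{\beta}}_2=\boldsymbol{U}_{p-r}^\top\boldsymbol{\beta}$, and assume $\widetilde S_1\widetilde S_1^\top$ and $\widetilde S_2^\top\boldsymbol{\Lambda}_{p-r}\widetilde S_2$ are invertible. Let $\boldsymbol{\xi}^*$ be a minimizer of $(\boldsymbol{\beta}-S_k\boldsymbol{\xi})^\top\boldsymbol{\Sigma}_{p-r}(\boldsymbol{\beta}-S_k\boldsymbol{\xi})$ over $\boldsymbol{\xi}\in\mathbb{R}^k$ subject to $\boldsymbol{U}_r^\top(\boldsymbol{\beta}-S_k\boldsymbol{\xi})=\boldsymbol{0}$. Then $(\boldsymbol{\beta}-S_k\boldsymbol{\xi}^*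 )^\top\boldsymbol{\Sigma}_{p-r}(\boldsymbol{\beta}-S_k\boldsymbol{\xi}^* )\le 2L_1+2L_2$, where $$L_1=\frac{\|\widetilde S_2^\top\boldsymbol{\Lambda}_{p-r}\widetilde S_2\|_2}{\lambda_{\min}(\widetilde S_1\widetilde S_1^\top)}\|\widetilde{\boldsymbol{\beta}}_1\|_2^2,\qquad L_2=\Big(1+\kappa(\widetilde S_2^\top\boldsymbol{\Lambda}_{p-r}\widetilde S_2)\,\kappa(\widetilde S_1\widetilde S_1^\top)\Big)\,\widetilde{\boldsymbol{\beta}}_2^\top\boldsymbol{\Lambda}_{p-r}\widetilde{\boldsymbol{\beta}}_2 .$$
   Context: $\boldsymbol{\Sigma}=\boldsymbol{U}\boldsymbol{\Lambda}\boldsymbol{U}^\top$ is the eigendecomposition with $\boldsymbol{U}$ orthogonal and $\boldsymbol{\Lambda}$ diagonal with nonincreasing diagonal entries; $\boldsymbol{U}_r\in\mathbb{R}^{p\times r}$ consists of the first $r$ columns, $\boldsymbol{\Lambda}_r\in\mathbb{R}^{r\times r}$ of the first $r$ eigenvalues. $\kappa(\boldsymbol{A})=\lambda_{\max}(\boldsymbol{A})/\lambda_{\min}(\boldsymbol{A})$ is the condition number and $\|\cdot\|_2$ the spectral norm. In the paper $S_k$ has i.i.d. $\mathcal{N}(0,1)$ entries, in which case the invertibility assumptions hold almost surely when $r\le k$ and $\boldsymbol{\Lambda}_{p-r}$ has at least $k$ positive entries. *)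

From HB Require Import structures.
From mathcomp Require Import all_boot all_order all_algebra.
From mathcomp Require Import all_classical all_reals.
Set Implicit Arguments. Unset Strict Implicit. Unset Printing Implicit Defensive.
Import Order.TTheory GRing.Theory Num.Theory.
Local Open Scope ring_scope.
Local Open Scope classical_set_scope.

(* Largest / smallest (real) eigenvalue of a square real matrix
   (used only on symmetric matrices, whose eigenvalues are real). *)
Definition lam_max (R : realType) (n : nat) (A : 'M[R]_n) : R :=
  sup [set a : R | eigenvalue A a].
Definition lam_min (R : realType) (n : nat) (A : 'M[R]_n) : R :=
  inf [set a : R | eigenvalue A a].

Definition cond_num (R : realType) (n : nat) (A : 'M[R]_n) : R :=
  lam_max A / lam_min A.

Definition spec_norm (R : realType) (m n : nat) (A : 'M[R]_(m, n)) : R :=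
  Num.sqrt (lam_max (A^T *m A)).

Definition sqnorm (R : realType) (n : nat) (v : 'cV[R]_n) : R :=
  \sum_i v i 0 ^+ 2.

Definition psd (R : realType) (n : nat) (A : 'M[R]_n) : Prop :=
  A^T = A /\ forall x : 'cV[R]_n, 0 <= (x^T *m A *m x) 0 0.

Definition qform (R : realType) (n : nat) (A : 'M[R]_n) (x : 'cV[R]_n) : R :=
  (x^T *m A *m x) 0 0.

(* The minimum-norm solution xa = S1^T (S1 S1^T)^-1 b1 of the constraint
   S1 xi = b1 is feasible, so the optimum is at most its objective
   (b2 - S2 xa)^T L (b2 - S2 xa) <= 2 b2^T L b2 + 2 xa^T M xa, where
   M = S2^T L S2.  Now xa^T M xa <= |M|_2 |xa|^2, and |xa|^2 = c^T A c with
   A = S1 S1^T and A c = b1; AM-GM together with the Rayleigh bound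
   lam_min(A) |c|^2 <= c^T A c gives c^T A c <= |b1|^2 / lam_min(A), hence
   the term 2 L1.  Condition numbers of PSD matrices are nonnegative, so
   b2^T L b2 <= L2.  The Rayleigh bounds for real symmetric matrices are
   obtained from the complex spectral theorem by complexification. *)

From HB Require Import structures.
From mathcomp Require Import all_boot all_order all_algebra.
From mathcomp Require Import all_classical all_reals.
From mathcomp Require Import complex.
From mathcomp Require Import ring lra.
Set Implicit Arguments. Unset Strict Implicit. Unset Printing Implicit Defensive.
Import Order.TTheory GRing.Theory Num.Theory.
Local Open Scope ring_scope.

Section HermitianSpectrum.
Local Open Scope sesquilinear_scope.
Context {C : numClosedFieldType} {n : nat}.

Lemma spectralmx_trC_mul (A : 'M[C]_n) : (spectralmx A)^t* *m spectralmx A = 1%:M.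
Proof. by rewrite -invmx_unitary ?spectral_unitarymx // mulVmx ?spectral_unit. Qed.

Lemma spectralmx_norm (A : 'M[C]_n) (x : 'cV_n) :
  \sum_i `|(spectralmx A *m x) i 0| ^+ 2 = (x^t* *m x) 0 0.
Proof.
have -> : x^t* *m x = (spectralmx A *m x)^t* *m (spectralmx A *m x).
  rewrite trmx_mul map_mxM mulmxA -(mulmxA _ _ (spectralmx A)).
  by rewrite spectralmx_trC_mul mulmx1.
by rewrite mxE; apply: eq_bigr => i _; rewrite !mxE normCK mulrC.
Qed.

Context {A : 'M[C]_n} (hermA : A \is hermsymmx).

Lemma hermmx_spectral_decomp :
  A = (spectralmx A)^t* *m diag_mx (spectral_diag A) *m spectralmx A.
Proof.
rewrite -invmx_unitary ?spectral_unitarymx //.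
exact/orthomx_spectralP/hermitian_normalmx.
Qed.

Lemma hermmx_form_spectral (x : 'cV_n) :
  (x^t* *m A *m x) 0 0 =
  \sum_i spectral_diag A 0 i * `|(spectralmx A *m x) i 0| ^+ 2.
Proof.
rewrite [in LHS]hermmx_spectral_decomp.
have -> : x^t* *m ((spectralmx A)^t* *m diag_mx (spectral_diag A) *m spectralmx A) *m x
    = (spectralmx A *m x)^t* *m diag_mx (spectral_diag A) *m (spectralmx A *m x).
  by rewrite trmx_mul map_mxM !mulmxA.
rewrite mul_mx_diag mxE; apply: eq_bigr => i _; rewrite !mxE.
by rewrite normCK; ring.
Qed.

Lemma eigenvalue_spectral_diag i : eigenvalue A (spectral_diag A 0 i).
Proof.
set P := spectralmx A.
have PPt : P *m P^t* = 1%:M by apply/unitarymxP/spectral_unitarymx.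
apply/eigenvalueP; exists (row i P).
  rewrite {1}hermmx_spectral_decomp rowE !mulmxA -(mulmxA _ P) PPt mulmx1.
  by rewrite -rowE -[X in X *m P]rowE row_diag_mx -scalemxAl -rowE.
apply/eqP => P_i0.
have : row i (P *m P^t* ) = 0 by rewrite row_mul P_i0 mul0mx.
by rewrite PPt => /rowP/(_ i); rewrite !mxE eqxx => /eqP; rewrite oner_eq0.
Qed.

End HermitianSpectrum.

Lemma eigenvalueN (F : fieldType) n (A : 'M[F]_n) a :
  eigenvalue (- A) a = eigenvalue A (- a).
Proof.
apply/eigenvalueP/eigenvalueP => -[v vA v0]; exists v => //.
  by rewrite -[A]opprK mulmxN vA scaleNr.
by rewrite mulmxN vA scaleNr opprK.
Qed.

Lemma eigenvalues_dim0 (F : fieldType) (A : 'M[F]_0) :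
  [set a | eigenvalue A a]%classic = set0.
Proof. by rewrite predeqE => a; split => //=; rewrite /eigenvalue thinmx0 eqxx. Qed.

Local Notation toC := (real_complex _).

Section RealQuadraticForms.
Variable R : realType.

Lemma sqnormE n (x : 'cV[R]_n) : sqnorm x = (x^T *m x) 0 0.
Proof. by rewrite /sqnorm mxE; apply: eq_bigr => i _; rewrite mxE expr2. Qed.

Lemma sqnorm_ge0 n (x : 'cV[R]_n) : 0 <= sqnorm x.
Proof. by apply: sumr_ge0 => i _; exact: sqr_ge0. Qed.

Lemma sqnorm_eq0 n (x : 'cV[R]_n) : sqnorm x = 0 -> x = 0.
Proof.
move=> /eqP; rewrite psumr_eq0 => [/allP x0|i _]; last exact: sqr_ge0.
apply/matrixP => i j; rewrite ord1 !mxE.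
by have := x0 i (mem_index_enum _); rewrite sqrf_eq0 => /eqP.
Qed.

Lemma qformM m n (A : 'M[R]_(m, n)) (L : 'M[R]_m) x :
  qform (A^T *m L *m A) x = qform L (A *m x).
Proof. by rewrite /qform trmx_mul !mulmxA. Qed.

Lemma qformMtr m n (A : 'M[R]_(m, n)) (L : 'M[R]_n) x :
  qform (A *m L *m A^T) x = qform L (A^T *m x).
Proof. by rewrite -qformM trmxK. Qed.

Lemma qform_gram m n (A : 'M[R]_(m, n)) x :
  qform (A *m A^T) x = sqnorm (A^T *m x).
Proof. by rewrite sqnormE /qform trmx_mul trmxK !mulmxA. Qed.

Lemma qform_diag n (l : 'rV[R]_n) x :
  qform (diag_mx l) x = \sum_j l 0 j * x j 0 ^+ 2.
Proof.
by rewrite /qform mul_mx_diag mxE; apply: eq_bigr => j _; rewrite !mxE; ring.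
Qed.

Lemma qformN n (A : 'M[R]_n) x : qform (- A) x = - qform A x.
Proof. by rewrite /qform mulmxN mulNmx mxE. Qed.

Lemma qform_dim0 (A : 'M[R]_0) x : qform A x = 0.
Proof. by rewrite /qform mxE big_ord0. Qed.

Lemma qform_subr_le n (L : 'M[R]_n) u v :
  (forall x, 0 <= qform L x) -> qform L (u - v) <= 2 * qform L u + 2 * qform L v.
Proof.
move=> L_ge0; have := L_ge0 (u + v).
have -> : qform L (u + v) = 2 * qform L u + 2 * qform L v - qform L (u - v).
  rewrite /qform !linearD !linearN /= !(mulmxDl, mulmxDr, mulNmx, mulmxN) !mxE.
  ring.
lra.
Qed.

Lemma psd_gram m n (A : 'M[R]_(m, n)) : psd (A *m A^T).
Proof.
by split=> [|x]; rewrite ?trmx_mul ?trmxK // -/(qform _ _) qform_gram sqnorm_ge0.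
Qed.

Lemma psdM m n (A : 'M[R]_(m, n)) (L : 'M[R]_m) :
  psd L -> psd (A^T *m L *m A).
Proof.
move=> [symL L_ge0]; split=> [|x]; first by rewrite !trmx_mul trmxK symL mulmxA.
by rewrite -/(qform _ _) qformM; exact: L_ge0.
Qed.

Lemma psd_diag n (l : 'rV[R]_n) :
  (forall j, 0 <= l 0 j) -> psd (diag_mx l).
Proof.
move=> l_ge0; split=> [|x]; first by rewrite tr_diag_mx.
by rewrite -/(qform _ _) qform_diag sumr_ge0 // => j _; rewrite mulr_ge0 ?sqr_ge0.
Qed.

Lemma psd_orthomx_diag_ge0 n (U : 'M[R]_n) (d : 'rV[R]_n) j :
  U^T *m U = 1%:M -> psd (U *m diag_mx d *m U^T) -> 0 <= d 0 j.
Proof.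
move=> UtU [_ /(_ (U *m delta_mx j 0))]; rewrite -/(qform _ _) qformMtr.
rewrite mulmxA UtU mul1mx qform_diag (bigD1 j) //= big1 => [|i /negbTE ji].
  by rewrite !mxE !eqxx expr1n mulr1 addr0.
by rewrite !mxE ji expr0n mulr0.
Qed.

Lemma dotmx_amgm n (a b : 'cV[R]_n) s : 0 < s ->
  2 * (a^T *m b) 0 0 <= s * sqnorm a + sqnorm b / s.
Proof.
move=> s_gt0; rewrite mxE /sqnorm !mulr_sumr mulr_suml -big_split /=.
apply: ler_sum => i _; rewrite mxE; set u := a i 0; set v := b i 0.
have sq_ge0 : 0 <= (s * u - v) ^+ 2 / s by rewrite divr_ge0 ?sqr_ge0 ?ltW.
have sq_expand : (s * u - v) ^+ 2 / s = s * u ^+ 2 - 2 * (u * v) + v ^+ 2 / s.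
  by field; rewrite gt_eqF.
lra.
Qed.

Lemma dotmx_le_sqnorm n (a b : 'cV[R]_n) s : 0 <= s ->
  sqnorm b <= s ^+ 2 * sqnorm a -> (a^T *m b) 0 0 <= s * sqnorm a.
Proof.
rewrite le_eqVlt => /predU1P [<- | s_gt0] b_le.
  have /sqnorm_eq0 -> : sqnorm b = 0.
    by apply/eqP; rewrite eq_le sqnorm_ge0 andbT; rewrite expr0n mul0r in b_le.
  by rewrite mulmx0 mxE mul0r.
have := dotmx_amgm a b s_gt0.
have : sqnorm b / s <= s * sqnorm a by rewrite ler_pdivrMr // mulrAC -expr2.
lra.
Qed.

(* The weights are the squared moduli of the coordinates of x in an
   orthonormal eigenbasis of the complexification of A. *)
Lemma symmx_form_weights n (A : 'M[R]_n) : A^T = A ->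
  exists D : 'I_n -> R, (forall i, eigenvalue A (D i)) /\
    forall x : 'cV[R]_n, exists w : 'I_n -> R,
      [/\ forall i, 0 <= w i, \sum_i w i = sqnorm x & qform A x = \sum_i D i * w i].
Proof.
move=> symA; pose AC := map_mx toC A.
have hermAC : AC \is hermsymmx.
  apply: realsym_hermsym; last by apply/mxOverP => i j; rewrite mxE complex_real.
  by apply/is_hermitianmxP; rewrite expr0 scale1r map_mx_id // map_trmx symA.
set P := spectralmx AC; set DC := spectral_diag AC.
have DC_real i : DC 0 i = toC (complex.Re (DC 0 i)).
  by rewrite RRe_real //; have /mxOverP := hermitian_spectral_diag_real hermAC; apply.
exists (fun i => complex.Re (DC 0 i)); split.
  move=> i; have := eigenvalue_spectral_diag hermAC i.
  by rewrite -/DC DC_real !eigenvalue_root_char -map_char_poly fmorph_root.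
move=> x; pose xC := map_mx toC x.
have xC_adj : (xC ^t* )%sesqui = xC^T.
  by apply/matrixP => i j; rewrite !mxE conj_Creal // complex_real.
pose w i := complex.Re (`|(P *m xC) i 0| ^+ 2).
have wE i : toC (w i) = `|(P *m xC) i 0| ^+ 2.
  by rewrite RRe_real // realX // normr_real.
exists w; split.
- by move=> i; rewrite -(@lecR R) wE; exact: exprn_ge0.
- apply: complexI; rewrite rmorph_sum (eq_bigr _ (fun i _ => wE i)).
  rewrite spectralmx_norm xC_adj /sqnorm rmorph_sum mxE; apply: eq_bigr => i _.
  by rewrite !mxE rmorphXn expr2.
- apply: complexI; rewrite rmorph_sum.
  have -> : toC (qform A x) = (xC^T *m AC *m xC) 0 0.
    by rewrite map_trmx -!map_mxM mxE.
  rewrite -xC_adj hermmx_form_spectral //; apply: eq_bigr => i _.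
  by rewrite rmorphM -/DC -/P [DC 0 i]DC_real -wE.
Qed.

Lemma eigenvalue_sqnorm n (A : 'M[R]_n) a : eigenvalue A a ->
  exists2 x : 'cV_n, 0 < sqnorm x & qform A x = a * sqnorm x.
Proof.
move=> /eigenvalueP [v vA v0]; exists v^T.
  rewrite lt_def sqnorm_ge0 andbT; apply: contra_neq v0 => /sqnorm_eq0 vT0.
  by rewrite -[v]trmxK vT0 trmx0.
by rewrite /qform sqnormE trmxK vA -scalemxAl mxE.
Qed.

Lemma sup_eq_max (E : set R) a : E a -> ubound E a -> sup E = a.
Proof.
move=> Ea ubEa; apply/eqP; rewrite eq_le ge_sup //=; last by exists a.
by apply: sup_upper_bound => //; split; [exists a | exists a].
Qed.

Lemma lam_min_oppmx n (A : 'M[R]_n) : lam_min A = - lam_max (- A).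
Proof.
rewrite /lam_min /lam_max /inf; congr (- sup _); rewrite predeqE => a.
split => [[b Ab <-] | Aa]; first by rewrite /= eigenvalueN opprK.
by exists (- a); rewrite /= ?opprK // -eigenvalueN.
Qed.

Lemma lam_max_symmx n (A : 'M[R]_n.+1) : A^T = A ->
  eigenvalue A (lam_max A) /\ forall x, qform A x <= lam_max A * sqnorm x.
Proof.
move=> symA; have [D [eigD formD]] := symmx_form_weights symA.
have [imax _ Dmax] := @arg_maxP _ _ _ ord0 xpredT D isT.
have form_le x : qform A x <= D imax * sqnorm x.
  have [w [w0 <- ->]] := formD x; rewrite mulr_sumr ler_sum // => i _.
  by apply: ler_wpM2r; [exact: w0 | exact: Dmax].
suff -> : lam_max A = D imax by [].
apply: sup_eq_max => [|a /eigenvalue_sqnorm [x x0 Ax]]; first exact: eigD.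
by rewrite -(ler_pM2r x0) -Ax.
Qed.

Lemma lam_min_symmx n (A : 'M[R]_n.+1) : A^T = A ->
  eigenvalue A (lam_min A) /\ forall x, lam_min A * sqnorm x <= qform A x.
Proof.
move=> symA; have symNA : (- A)^T = - A by rewrite linearN /= symA.
have [eigN formN] := lam_max_symmx symNA.
rewrite lam_min_oppmx -eigenvalueN; split => // x.
by rewrite mulNr lerNl -qformN.
Qed.

Lemma qform_le_lam_max n (A : 'M[R]_n) x : A^T = A ->
  qform A x <= lam_max A * sqnorm x.
Proof.
case: n A x => [|n] A x symA; last exact: (lam_max_symmx symA).2.
by rewrite qform_dim0 /sqnorm big_ord0 mulr0.
Qed.

Lemma eigenvalue_psd_ge0 n (A : 'M[R]_n) a :
  psd A -> eigenvalue A a -> 0 <= a.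
Proof.
move=> [_ A_ge0] /eigenvalue_sqnorm [x x0 Ax].
by rewrite -(pmulr_lge0 _ x0) -Ax; exact: A_ge0.
Qed.

Lemma lam_max_psd_ge0 n (A : 'M[R]_n) : psd A -> 0 <= lam_max A.
Proof.
case: n A => [|n] A psdA; first by rewrite /lam_max eigenvalues_dim0 sup0.
exact: eigenvalue_psd_ge0 psdA (lam_max_symmx psdA.1).1.
Qed.

Lemma lam_min_psd_ge0 n (A : 'M[R]_n) : psd A -> 0 <= lam_min A.
Proof.
case: n A => [|n] A psdA.
  by rewrite /lam_min /inf eigenvalues_dim0 image_set0 sup0 oppr0.
exact: eigenvalue_psd_ge0 psdA (lam_min_symmx psdA.1).1.
Qed.

Lemma lam_min_psd_gt0 n (A : 'M[R]_n.+1) :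
  psd A -> A \in unitmx -> 0 < lam_min A.
Proof.
move=> psdA unitA; rewrite lt_def lam_min_psd_ge0 // andbT.
have [/eigenvalueP [v vA v0] _] := lam_min_symmx psdA.1.
apply: contra_neq v0 => lam0.
by rewrite -(mulmxK unitA v) vA lam0 scale0r mul0mx.
Qed.

Lemma cond_num_psd_ge0 n (A : 'M[R]_n) : psd A -> 0 <= cond_num A.
Proof. by move=> psdA; rewrite divr_ge0 ?lam_max_psd_ge0 ?lam_min_psd_ge0. Qed.

Lemma qform_le_spec_norm n (M : 'M[R]_n) x :
  qform M x <= spec_norm M * sqnorm x.
Proof.
have psdMtM : psd (M^T *m M) by rewrite -{2}[M]trmxK; exact: psd_gram.
rewrite /qform -mulmxA; apply: dotmx_le_sqnorm; first exact: sqrtr_ge0.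
rewrite sqr_sqrtr ?lam_max_psd_ge0 //.
rewrite -[M in M *m x]trmxK -qform_gram trmxK.
exact: qform_le_lam_max psdMtM.1.
Qed.

Lemma qform_le_sqnorm_lam_min n (A : 'M[R]_n) c :
  psd A -> A \in unitmx -> qform A c <= sqnorm (A *m c) / lam_min A.
Proof.
case: n A c => [|n] A c psdA unitA.
  by rewrite qform_dim0 divr_ge0 ?sqnorm_ge0 ?lam_min_psd_ge0.
have lam_gt0 := lam_min_psd_gt0 psdA unitA.
have := (lam_min_symmx psdA.1).2 c; have := dotmx_amgm c (A *m c) lam_gt0.
rewrite [c^T *m _]mulmxA -/(qform A c).
lra.
Qed.

End RealQuadraticForms.

Theorem lemma2 (R : realType) (r q k : nat)
  (Sigma U : 'M[R]_(r + q)) (d : 'rV[R]_(r + q))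
  (beta : 'cV[R]_(r + q)) (S : 'M[R]_(r + q, k)) (xi_star : 'cV[R]_k) :
  psd Sigma ->
  U^T *m U = 1%:M ->
  (forall i j : 'I_(r + q), (i <= j)%N -> d 0 j <= d 0 i) ->
  Sigma = U *m diag_mx d *m U^T ->
  (r <= k)%N ->
  let Ur := lsubmx U in
  let Upr := rsubmx U in
  let Lpr := diag_mx (rsubmx d) in
  let Sigpr := Upr *m Lpr *m Upr^T in
  let S1 := Ur^T *m S in
  let S2 := Upr^T *m S in
  let b1 := Ur^T *m beta in
  let b2 := Upr^T *m beta in
  S1 *m S1^T \in unitmx ->
  S2^T *m Lpr *m S2 \in unitmx ->
  Ur^T *m (beta - S *m xi_star) = 0 ->
  (forall xi : 'cV[R]_k, Ur^T *m (beta - S *m xi) = 0 ->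
     qform Sigpr (beta - S *m xi_star) <= qform Sigpr (beta - S *m xi)) ->
  let L1 := spec_norm (S2^T *m Lpr *m S2) / lam_min (S1 *m S1^T) * sqnorm b1 in
  let L2 := (1 + cond_num (S2^T *m Lpr *m S2) * cond_num (S1 *m S1^T))
            * qform Lpr b2 in
  qform Sigpr (beta - S *m xi_star) <= 2 * L1 + 2 * L2.
Proof.
move=> psdSigma UtU _ SigmaE _ Ur Upr Lpr Sigpr S1 S2 b1 b2 unitA _ _ optimal.
cbv zeta.
set A := S1 *m S1^T in unitA *; set M := S2^T *m Lpr *m S2.
set L1 := _ / _ * _; set L2 := (1 + _) * _.
have Lpr_psd : psd Lpr.
  apply: psd_diag => j; rewrite mxE.
  by apply: (psd_orthomx_diag_ge0 _ UtU); rewrite -SigmaE.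
have A_psd : psd A := psd_gram S1.
have M_psd : psd M := psdM S2 Lpr_psd.
pose c := invmx A *m b1; pose xa := S1^T *m c.
have feasible_xa : Ur^T *m (beta - S *m xa) = 0.
  by apply/eqP; rewrite mulmxBr subr_eq0 mulmxA -/S1 mulmxA -/A mulKVmx.
have objective_xa : qform Sigpr (beta - S *m xa) = qform Lpr (b2 - S2 *m xa).
  by rewrite qformMtr mulmxBr mulmxA.
have split_xa : qform Lpr (b2 - S2 *m xa) <= 2 * qform Lpr b2 + 2 * qform M xa.
  by rewrite qformM; apply: qform_subr_le Lpr_psd.2.
have M_xa_le : qform M xa <= L1.
  apply: le_trans (qform_le_spec_norm M xa) _.
  rewrite /L1 mulrAC -mulrA ler_wpM2l ?sqrtr_ge0 // -qform_gram.
  by rewrite -{1}(mulKVmx unitA b1) qform_le_sqnorm_lam_min.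
have b2_le : qform Lpr b2 <= L2.
  apply: ler_peMl; first exact: Lpr_psd.2.
  by rewrite lerDl mulr_ge0 ?cond_num_psd_ge0.
have := optimal xa feasible_xa; rewrite objective_xa.
lra.
Qed.
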